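(* Let $X\subset\mathbf P$ be a quasismooth hypersurface defined by $f\in S_\beta$. If $h\in J(f)$ is homogeneous of degree $(d+1)\beta-2\beta_0$, then the Čech cocycle $\left\{\dfrac{h\,c_I^\beta\,\hat x_I\,\Omega}{f_{i_0}\cdots f_{i_d}}\right\}_{I=(i_0,\dots,i_d)}$ in $C^d(\mathcal U,\Omega^d_{\mathbf P})$ is a Čech coboundary. Consequently, the assignment $h\mapsto$ (class of this cocycle) induces a well-defined map $\lambda:R(f)_{(d+1)\beta-2\beta_0}\to H^d(\mathbf P,\Omega^d_{\mathbf P})=H^{d,d}(\mathbf P)$.
   Context: $\mathbf P$ is a complete simplicial toric variety of dimension $d$ with primitive ray generators $e_1,\dots,e_n$, divisors $D_1,\dots,D_n$, homogeneous coordinate ring $S=\mathbb C[x_1,\dots,x_n]$ graded by $A_{d-1}(\mathbf P)$ with $\deg x_i=[D_i]$, $\beta_0=\sum_i\deg x_i$, $f_i=\partial f/\partial x_i$. $X$ quasismooth means the $f_i$ have no common zero on $\mathbf P$; $\mathcal U=\{U_i\}$, $U_i=\{f_i\ne0\}$. $J(f)=\langle f_1,\dots,f_n\rangle$, $R(f)=S/J(f)$. Fix a basis $m_1,\dots,m_d$ of $M$; $\hat x_I=\prod_{i\notin I}x_i$; $\Omega=\sum_{|I|=d}\det(e_I)\hat x_I dx_I$ where $\det(e_I)=\det(\langle m_j,e_{i_k}\rangle)$. For $\beta=[\sum b_iD_i]$ and ordered $I=(i_0,\dots,i_d)$, $c_I^\beta$ is the determinant of the $(d+1)\times(d+1)$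 matrix with first row $(b_{i_0},\dots,b_{i_d})$ and further rows $(\langle m_j,e_{i_0}\rangle,\dots,\langle m_j,e_{i_d}\rangle)$, $j=1,\dots,d$. *)

From mathcomp Require Import all_boot all_algebra.
From mathcomp Require Import reals.
From mathcomp Require Import complex.
From mathcomp Require Import mpoly.
Set Implicit Arguments. Unset Strict Implicit. Unset Printing Implicit Defensive.
Import GRing.Theory Num.Theory.
Local Open Scope ring_scope.

Section ToricCech.
Variables (R : realType) (d n : nat).
(* e i = coordinates of the primitive ray generator e_i in the basis of N dual
   to the fixed basis m_1..m_d of M, i.e. (e i) 0 j = <m_j, e_i>. *)
Variable e : 'I_n -> 'rV[int]_d.

Definition ray (i : 'I_n) : 'rV[R]_d := map_mx (fun z : int => z%:~R) (e i).

Definition in_cone (s : {set 'I_n}) (v : 'rV[R]_d) : Prop :=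
  exists lam : 'I_n -> R,
    [/\ forall i, 0 <= lam i, forall i, i \notin s -> lam i = 0
      & v = \sum_i lam i *: ray i].

Definition complete_simplicial_fan (Sigma : {set {set 'I_n}}) : Prop :=
  injective e /\
      (forall i, forall k : int, (forall j : 'I_d, (k %| e i ord0 j)%Z) -> `|k| = 1) /\
      (forall i, [set i] \in Sigma) /\
      (forall s t : {set 'I_n}, s \in Sigma -> t \subset s -> t \in Sigma) /\
      (forall s, s \in Sigma -> forall lam : 'I_n -> R,
        (forall i, i \notin s -> lam i = 0) -> \sum_i lam i *: ray i = 0 ->
        forall i, lam i = 0) /\
      (forall s t : {set 'I_n}, s \in Sigma -> t \in Sigma -> forall v,
        in_cone s v -> in_cone t v -> in_cone (s :&: t) v) /\
      (forall v, exists2 s, s \in Sigma & in_cone s v).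

Notation C := (R[i]).
Notation S := {mpoly C[n]}.

Definition pairing (u : 'rV[int]_d) (i : 'I_n) : int := \sum_j u 0 j * e i 0 j.

(* p is homogeneous of degree beta = [sum_i b_i D_i] in A_{d-1}(P):
   every monomial x^a of p has a - b in the image of M -> Z^n *)
Definition is_homog (b : 'I_n -> int) (p : S) : Prop :=
  forall m, m \in msupp p ->
    exists u : 'rV[int]_d, forall i, (m i)%:Z - b i = pairing u i.

(* X = V(f) quasismooth: the partials f_i have no common zero on P,
   i.e. every common zero in C^n lies in the exceptional set Z(Sigma) =
   V(x^_sigma : sigma in Sigma). *)
Definition quasismooth (Sigma : {set {set 'I_n}}) (f : S) : Prop :=
  forall z : 'I_n -> C, (forall i, (mderiv i f).@[z] = 0) ->
    forall s, s \in Sigma -> \prod_(i | i \notin s) z i = 0.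

Definition in_jacobian (f h : S) : Prop :=
  exists g : 'I_n -> S, h = \sum_i g i * mderiv i f.

Definition incr p (I : {ffun 'I_p -> 'I_n}) : Prop :=
  forall a b : 'I_p, (a < b)%N -> (I a < I b)%N.

Definition face (I : {ffun 'I_d.+1 -> 'I_n}) (t : 'I_d.+1) : {ffun 'I_d -> 'I_n} :=
  [ffun k => I (lift t k)].

Definition cI (b : 'I_n -> int) (I : {ffun 'I_d.+1 -> 'I_n}) : int :=
  \det (\matrix_(r < d.+1, c < d.+1)
          if unlift ord0 r is Some j then e (I c) 0 j else b (I c)).

Definition xhat p (I : {ffun 'I_p -> 'I_n}) : S :=
  \prod_(i | i \notin codom I) 'X_i.

Definition fprod p (f : S) (I : {ffun 'I_p -> 'I_n}) : S :=
  \prod_(t < p) mderiv (I t) f.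

(* equality a / g^p = a' / g^p' in the localization S_g *)
Definition loc_eq (g a : S) (p : nat) (a' : S) (p' : nat) : Prop :=
  exists N : nat, g ^+ N * (a * g ^+ p' - a' * g ^+ p) = 0.

(* representative of the degree k * deg(f_J) - beta_0 in Z^n, where
   deg f_j = beta - [D_j] and beta_0 = [sum_i D_i] *)
Definition omega_deg (b : 'I_n -> int) (k : nat) (J : {ffun 'I_d -> 'I_n})
  : 'I_n -> int :=
  fun i => k%:Z * (d%:Z * b i - (\sum_(t < d) (J t == i))%:Z) - 1.

(* The Cech cochain I |-> h c_I^beta \hat x_I Omega / (f_{i_0}...f_{i_d})
   in C^d(U, Omega^d_P) is a coboundary: there is a (d-1)-cochain
   omega_J = G_J Omega / (f_{j_0}...f_{j_{d-1}})^k, with G_J of degree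
   k deg(f_J) - beta_0 (so that omega_J is a section of Omega^d_P over U_J),
   whose Cech differential is that cochain. *)
Definition cech_coboundary (b : 'I_n -> int) (f h : S) : Prop :=
  exists k : nat, exists G : {ffun 'I_d -> 'I_n} -> S,
    (forall J, incr J -> is_homog (omega_deg b k J) (G J)) /\
    forall I : {ffun 'I_d.+1 -> 'I_n}, incr I ->
      loc_eq (fprod f I)
        (\sum_(t < d.+1) (-1) ^+ t * G (face I t) * mderiv (I t) f ^+ k) k
        (h * ((cI b I)%:~R)%:MP * xhat I) 1.

End ToricCech.

(* Write h = sum_j g_j f_j.  For a (d+1)-tuple I and an index j, the
   (d+2)x(d+2) determinant with columns (b_k, <m_1,e_k>, ..., <m_d,e_k>),
   k in (j, I), vanishes when a row is repeated; its Laplace expansions give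
   weights w_s = (-1)^s c^beta_{(j,I) minus s} killing both beta and every ray,
   so the toric Euler formula turns them into
     sum_t (-1)^t c^beta_{(j, I minus i_t)} x_{i_t} f_{i_t} = c^beta_I x_j f_j.
   Multiplying by \hat x_I shows that G_J = sum_j c^beta_{(j,J)} \hat x_{(j,J)} g_j
   has Cech differential exactly h c^beta_I \hat x_I Omega / f_I, with no power
   of f_I needed.  Replacing G_J by its homogeneous component of the degree of
   a section over U_J changes nothing, because the target is homogeneous and
   multiplication by f_{i_t} shifts all degrees uniformly. *)

From HB Require Import structures.
From mathcomp Require Import all_boot all_algebra.
From mathcomp Require Import reals complex mpoly boolp.
From mathcomp Require Import ring zify.
Set Implicit Arguments. Unset Strict Implicit. Unset Printing Implicit Defensive.
Import GRing.Theory Num.Theory.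
Local Open Scope ring_scope.

Lemma mcoeff_sumX (R : nzRingType) (n : nat) (s : seq 'X_{1..n}) (a : 'X_{1..n} -> R) k :
  uniq s -> (\sum_(m <- s) a m *: 'X_[m] : {mpoly R[n]})@_k = if k \in s then a k else 0.
Proof.
move=> uniq_s; rewrite raddf_sum /=; case: ifP => [ks|/negbT ks].
  rewrite (bigD1_seq k) //= mcoeffZ mcoeffX eqxx mulr1 big1 ?addr0 // => m /negbTE mk.
  by rewrite mcoeffZ mcoeffX mk mulr0.
rewrite big1_seq // => m /andP[_ ms]; rewrite mcoeffZ mcoeffX.
by rewrite (_ : (m == k) = false) ?mulr0 //; apply: contraNF ks => /eqP <-.
Qed.

Lemma sum_eq_pred (n : nat) (P : pred 'I_n) k : (\sum_(i | P i) (i == k))%N = P k.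
Proof.
rewrite big_mkcond (bigD1 k) //= eqxx big1 ?addn0; first by case: (P k).
by move=> i /negbTE ->; case: (P i).
Qed.

Section HomogeneousPart.
Variables (R : realType) (d n : nat) (e : 'I_n -> 'rV[int]_d).
Local Notation S := {mpoly R[i][n]}.

Lemma pairingD u v i : pairing e (u + v) i = pairing e u i + pairing e v i.
Proof. by rewrite -big_split; apply: eq_bigr => j _; rewrite mxE mulrDl. Qed.

Lemma pairingN u i : pairing e (- u) i = - pairing e u i.
Proof. by rewrite -sumrN; apply: eq_bigr => j _; rewrite mxE mulNr. Qed.

Lemma pairing0 i : pairing e 0 i = 0.
Proof. by rewrite /pairing big1 // => j _; rewrite mxE mul0r. Qed.

Definition in_degree (D : 'I_n -> int) (m : 'X_{1..n}) : Prop :=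
  exists u : 'rV[int]_d, forall i, (m i)%:Z - D i = pairing e u i.

Lemma in_degreeD D E D' m m' : (forall i, D' i = D i + E i) ->
  in_degree D m -> in_degree E m' -> in_degree D' (m + m').
Proof.
move=> DE [u mu] [v m'v]; exists (u + v) => i.
by rewrite mnmDE pairingD -mu -m'v DE PoszD; ring.
Qed.

Lemma in_degreeDl D E D' m m' : (forall i, D' i = D i + E i) ->
  in_degree D' (m + m') -> in_degree E m' -> in_degree D m.
Proof.
move=> DE [u mu] [v m'v]; exists (u - v) => i.
by rewrite pairingD pairingN -mu -m'v mnmDE DE PoszD; ring.
Qed.

Lemma homog_ext D D' (p : S) : is_homog e D p -> D =1 D' -> is_homog e D' p.
Proof. by move=> homp DD' m /homp[u mu]; exists u => i; rewrite -DD'. Qed.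

Definition homog_part (D : 'I_n -> int) (p : S) : S :=
  \sum_(m <- msupp p) (if `[< in_degree D m >] then p@_m else 0) *: 'X_[m].

Lemma mcoeff_homog_part D p k :
  (homog_part D p)@_k = if `[< in_degree D k >] then p@_k else 0.
Proof.
rewrite mcoeff_sumX ?msupp_uniq //; case: ifP => // /negbT/memN_msupp_eq0 ->.
by case: ifP.
Qed.

Lemma homog_part_homog D p : is_homog e D (homog_part D p).
Proof.
move=> m; rewrite mcoeff_msupp mcoeff_homog_part.
by case: asboolP => // _; rewrite eqxx.
Qed.

Lemma homog_part_id D p : is_homog e D p -> homog_part D p = p.
Proof.
move=> homp; apply/mpolyP => k; rewrite mcoeff_homog_part.
case: asboolP => // kD; case: (boolP (k \in msupp p)) => [/homp //|].
by move/memN_msupp_eq0.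
Qed.

Lemma homog_partB D : zmod_morphism (homog_part D).
Proof.
move=> p q; apply/mpolyP => k.
by rewrite mcoeffB !mcoeff_homog_part mcoeffB; case: ifP; rewrite ?subr0.
Qed.

HB.instance Definition _ D :=
  GRing.isZmodMorphism.Build S S (homog_part D) (homog_partB D).

Lemma homog_partM D E D' p (q : S) : (forall i, D' i = D i + E i) ->
  is_homog e E q -> homog_part D p * q = homog_part D' (p * q).
Proof.
move=> DE homq; apply/mpolyP => k; rewrite mcoeff_homog_part !mcoeffM.
case: asboolP => [kD'|kD'].
  apply: eq_bigr => x /eqP kx; rewrite mcoeff_homog_part; case: asboolP => // xD.
  have [/homq x2E|/memN_msupp_eq0 ->] := boolP ((x.2 : 'X_{1..n}) \in msupp q).
    by case: xD; apply: in_degreeDl DE _ x2E; rewrite -kx.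
  by rewrite !mulr0.
rewrite big1 // => x /eqP kx; rewrite mcoeff_homog_part.
case: asboolP => [xD|_]; last by rewrite mul0r.
have [/homq x2E|/memN_msupp_eq0 ->] := boolP ((x.2 : 'X_{1..n}) \in msupp q).
  by case: kD'; rewrite kx; apply: in_degreeD DE xD x2E.
by rewrite mulr0.
Qed.

Lemma homog_mul D E D' (p q : S) : (forall i, D' i = D i + E i) ->
  is_homog e D p -> is_homog e E q -> is_homog e D' (p * q).
Proof.
move=> DE homp homq; rewrite -(homog_part_id homp) (homog_partM _ DE homq).
exact: homog_part_homog.
Qed.

Lemma homog_C c : is_homog e (fun=> 0) (c%:MP : S).
Proof.
move=> m; rewrite msuppC; case: eqP => // _; rewrite mem_seq1 => /eqP ->.
by exists 0 => i; rewrite pairing0 mnm0E subrr.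
Qed.

Lemma homog_X (m : 'X_{1..n}) : is_homog e (fun i => (m i)%:Z) ('X_[m] : S).
Proof.
by move=> m'; rewrite msuppX mem_seq1 => /eqP ->; exists 0 => i; rewrite pairing0 subrr.
Qed.

Lemma homog_prodX (P : pred 'I_n) :
  is_homog e (fun k => (P k : nat)%:Z) (\prod_(i | P i) 'X_i : S).
Proof.
apply: (homog_ext _ (fun k => congr1 Posz (sum_eq_pred P k))).
elim: (index_enum _) => [|a r IH].
  rewrite big_nil -mpolyC1; apply: (homog_ext (homog_C (c := 1))) => k.
  by rewrite big_nil.
rewrite big_cons; case Pa: (P a).
  by apply: homog_mul (homog_X (m := U_(a))) IH => k; rewrite big_cons Pa mnm1E PoszD.
by apply: (homog_ext IH) => k; rewrite big_cons Pa.
Qed.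

Lemma homog_mderiv D (p : S) j : is_homog e D p ->
  is_homog e (fun i => D i - (j == i)%:R) (mderiv j p).
Proof.
move=> homp m; rewrite mcoeff_msupp mcoeff_deriv => nz.
have : (m + U_(j))%MM \in msupp p.
  by rewrite mcoeff_msupp; apply: contraNneq nz => ->; rewrite mul0rn.
move/homp => [u mu]; exists u => i; rewrite -mu mnmDE mnm1E PoszD; ring.
Qed.

End HomogeneousPart.

Section EulerRelation.
Variables (R : realType) (d n : nat) (e : 'I_n -> 'rV[int]_d).
Local Notation S := {mpoly R[i][n]}.

Lemma mcoeff_X_mderiv i (p : S) k : ('X_i * mderiv i p)@_k = p@_k * (k i)%:R.
Proof.
have -> : 'X_i * mderiv i p = \sum_(m <- msupp p) (p@_m * (m i)%:R) *: 'X_[m].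
  rewrite /mderiv mulr_sumr; apply: eq_bigr => m _; rewrite -scalerAr mulrC.
  have [->|mi_gt0] := posnP (m i); first by rewrite !mulr0 !scale0r.
  congr (_ *: _); rewrite -mpolyXD; congr 'X_[_]; apply/mnmP => j.
  rewrite mnmDE mnmBE mnm1E; case: eqP => [<-|_]; last by rewrite subn0.
  by rewrite add1n subn1 prednK.
rewrite mcoeff_sumX ?msupp_uniq //.
by case: ifP => // /negbT/memN_msupp_eq0 ->; rewrite mul0r.
Qed.

Lemma euler_relation (b : 'I_n -> int) (f : S) q (K : 'I_q -> 'I_n) (w : 'I_q -> int) :
  is_homog e b f -> (forall j, \sum_s w s * e (K s) 0 j = 0) ->
  \sum_s ('X_(K s) * mderiv (K s) f) *~ w s = f *~ (\sum_s w s * b (K s)).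
Proof.
move=> homf rel_w; apply/mpolyP => k; rewrite raddf_sum /= raddfMz /=.
under eq_bigr => s _ do rewrite raddfMz /= mcoeff_X_mderiv.
have [/homf[u ku]|/memN_msupp_eq0 ->] := boolP (k \in msupp f); last first.
  by rewrite mul0rz big1 // => s _; rewrite mul0r mul0rz.
under eq_bigr => s _ do rewrite -mulrzr -mulrA -[(k (K s))%:R]/((k (K s))%:Z%:~R) -intrM.
rewrite -mulr_sumr -rmorph_sum -mulrzr; congr (_ * _%:~R).
have pairing_w : \sum_s pairing e u (K s) * w s = 0.
  rewrite /pairing; under eq_bigr => s _ do rewrite mulr_suml.
  rewrite exchange_big /=; apply: big1 => j _.
  rewrite -[RHS](mulr0 (u 0 j)) -[in RHS](rel_w j) mulr_sumr.
  by apply: eq_bigr => s _; ring.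
rewrite -[RHS]addr0 -[X in _ + X]pairing_w -big_split /=; apply: eq_bigr => s _.
by rewrite (_ : Posz (k (K s)) = b (K s) + pairing e u (K s)) -?ku; ring.
Qed.

Definition cI_entry (b : 'I_n -> int) (r : 'I_d.+1) (i : 'I_n) : int :=
  if unlift ord0 r is Some j then e i 0 j else b i.

(* Laplace expansion along the first row of a determinant whose first row
   repeats row [r]. *)
Lemma cI_laplace b (K : {ffun 'I_d.+2 -> 'I_n}) r :
  \sum_(s < d.+2) (-1) ^+ s * cI e b (face K s) * cI_entry b r (K s) = 0.
Proof.
pose A : 'M[int]_d.+2 :=
  \matrix_(r', c) cI_entry b (if unlift ord0 r' is Some r'' then r'' else r) (K c).
have detA0 : \det A = 0.
  apply: (determinant_alternate (neq_lift ord0 r)) => c.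
  by rewrite !mxE liftK unlift_none.
rewrite -[RHS]detA0 (expand_det_row _ ord0); apply: eq_bigr => s _.
rewrite /cofactor !mxE unlift_none add0n.
suff -> : row' ord0 (col' s A) = \matrix_(a, c) cI_entry b a (face K s c).
  by rewrite mulrC mulrA.
by apply/matrixP => a c; rewrite !mxE ffunE liftK.
Qed.

Lemma cI_euler b (f : S) (K : {ffun 'I_d.+2 -> 'I_n}) : is_homog e b f ->
  \sum_(s < d.+2) (-1) ^+ s * (cI e b (face K s))%:~R * ('X_(K s) * mderiv (K s) f) = 0.
Proof.
move=> homf; pose w (s : 'I_d.+2) := (-1) ^+ s * cI e b (face K s).
have rel_w j : \sum_s w s * e (K s) 0 j = 0.
  by have := cI_laplace b K (lift ord0 j); rewrite /cI_entry liftK.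
have w_b : \sum_s w s * b (K s) = 0.
  by have := cI_laplace b K ord0; rewrite /cI_entry unlift_none.
rewrite -(mulr0z f) -[X in _ = f *~ X]w_b -(euler_relation homf rel_w).
by apply: eq_bigr => s _; rewrite -[RHS]mulrzr intrM intr_sign mulrC.
Qed.

End EulerRelation.

Definition ffun_cons n p (j : 'I_n) (J : {ffun 'I_p -> 'I_n}) : {ffun 'I_p.+1 -> 'I_n} :=
  [ffun k => if unlift ord0 k is Some k' then J k' else j].

Lemma ffun_cons0 n p j (J : {ffun 'I_p -> 'I_n}) : ffun_cons j J ord0 = j.
Proof. by rewrite ffunE unlift_none. Qed.

Lemma ffun_cons_lift n p j (J : {ffun 'I_p -> 'I_n}) k : ffun_cons j J (lift ord0 k) = J k.
Proof. by rewrite ffunE liftK. Qed.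

Lemma lift0_lift p (t : 'I_p.+1) (k : 'I_p) :
  lift (lift ord0 t) (lift ord0 k) = lift ord0 (lift t k).
Proof. by apply: val_inj; rewrite /= /bump !leq0n !add1n ltnS addnS. Qed.

Lemma face_ffun_cons0 n p j (I : {ffun 'I_p.+1 -> 'I_n}) : face (ffun_cons j I) ord0 = I.
Proof. by apply/ffunP => k; rewrite !ffunE liftK. Qed.

Lemma face_ffun_cons_lift n p j (I : {ffun 'I_p.+1 -> 'I_n}) (t : 'I_p.+1) :
  face (ffun_cons j I) (lift ord0 t) = ffun_cons j (face I t).
Proof.
apply/ffunP => k; rewrite !ffunE; case: (unliftP ord0 k) => [k'|] ->.
  by rewrite lift0_lift !liftK ffunE.
by rewrite (_ : lift (lift ord0 t) ord0 = ord0) ?unlift_none //; apply: val_inj.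
Qed.

Lemma codom_ffun_cons n p j (J : {ffun 'I_p -> 'I_n}) i :
  (i \in codom (ffun_cons j J)) = (i == j) || (i \in codom J).
Proof.
apply/codomP/orP => [[k ->]|[/eqP ->|/codomP[k ->]]].
- by case: (unliftP ord0 k) => [k'|] ->; rewrite ?ffun_cons_lift ?ffun_cons0;
    [right; apply: codom_f | left].
- by exists ord0; rewrite ffun_cons0.
- by exists (lift ord0 k); rewrite ffun_cons_lift.
Qed.

Lemma codom_face n p (I : {ffun 'I_p.+1 -> 'I_n}) t i :
  (i \in codom I) = (i == I t) || (i \in codom (face I t)).
Proof.
apply/codomP/orP => [[k ->]|[/eqP ->|/codomP[k ->]]].
- case: (unliftP t k) => [k'|] ->; last by left.
  by right; apply/codomP; exists k'; rewrite ffunE.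
- by exists t.
- by exists (lift t k); rewrite ffunE.
Qed.

Lemma face_notin n p (I : {ffun 'I_p.+1 -> 'I_n}) t :
  injective I -> I t \notin codom (face I t).
Proof.
move=> injI; apply/codomP => -[k]; rewrite ffunE => /injI tk.
by have := neq_lift t k; rewrite -tk eqxx.
Qed.

Lemma incr_injective n p (I : {ffun 'I_p -> 'I_n}) : incr I -> injective I.
Proof.
move=> incrI a c Iac; case: (ltngtP a c) => [ac|ca|/val_inj //].
- by have := incrI _ _ ac; rewrite Iac ltnn.
- by have := incrI _ _ ca; rewrite Iac ltnn.
Qed.

Lemma sum_face_eq n p (I : {ffun 'I_p.+1 -> 'I_n}) t k : injective I ->
  ((\sum_(c < p) (face I t c == k)) + (I t == k))%N = (k \in codom I).
Proof.
move=> injI; rewrite addnC.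
rewrite (eq_bigr (fun c => (I (lift t c) == k) : nat)) => [|c _]; last by rewrite ffunE.
rewrite -(bigD1_ord (P := fun=> true) (F := fun c => (I c == k) : nat) t) //.
have [/codomP[c0 ->]|kI] := boolP (k \in codom I).
  rewrite (bigD1 c0) //= eqxx big1 // => c /negbTE c_c0.
  by apply/eqP; rewrite eqb0; apply: contraFN c_c0 => /eqP/injI ->.
rewrite big1 // => c _; apply/eqP; rewrite eqb0.
by apply: contraNN kI => /eqP <-; apply: codom_f.
Qed.

Section JacobianCochain.
Variables (R : realType) (d n : nat) (e : 'I_n -> 'rV[int]_d).
Local Notation S := {mpoly R[i][n]}.
Local Notation cIS b I := ((cI e b I)%:~R : S).

Lemma cI_ffun_cons_mem b (J : {ffun 'I_d -> 'I_n}) j :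
  j \in codom J -> cI e b (ffun_cons j J) = 0.
Proof.
case/codomP => k ->; rewrite /cI -det_tr.
apply: (determinant_alternate (neq_lift ord0 k)) => r.
by rewrite !mxE ffun_cons0 ffun_cons_lift.
Qed.

Lemma cI_euler_ffun_cons b (f : S) (I : {ffun 'I_d.+1 -> 'I_n}) j : is_homog e b f ->
  \sum_(t < d.+1) (-1) ^+ t * cIS b (ffun_cons j (face I t)) * ('X_(I t) * mderiv (I t) f)
  = cIS b I * ('X_j * mderiv j f).
Proof.
move=> homf; have /eqP := cI_euler (ffun_cons j I) homf.
rewrite big_ord_recl face_ffun_cons0 ffun_cons0 expr0 mul1r addr_eq0 => /eqP ->.
rewrite -sumrN; apply: eq_bigr => t _.
by rewrite face_ffun_cons_lift ffun_cons_lift /= exprS !mulN1r !mulNr opprK.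
Qed.

Lemma mulX_xhat p q (A : {ffun 'I_p -> 'I_n}) (B : {ffun 'I_q -> 'I_n}) x :
  (forall i, (i \in codom B) = (i == x) || (i \in codom A)) -> x \notin codom A ->
  'X_x * xhat R B = xhat R A.
Proof.
move=> codomB xA; rewrite /xhat [RHS](bigD1 x) //=; congr (_ * _).
by apply: eq_bigl => i; rewrite codomB negb_or andbC.
Qed.

Lemma mpolyX_neq0 j : ('X_j : S) != 0.
Proof.
apply/eqP => /(congr1 (mcoeff U_(j))).
by rewrite mcoeffXU eqxx mcoeff0 => /eqP; rewrite oner_eq0.
Qed.

Lemma xhat_euler_ffun_cons b (f : S) (I : {ffun 'I_d.+1 -> 'I_n}) j :
  is_homog e b f -> injective I ->
  \sum_(t < d.+1) (-1) ^+ t * cIS b (ffun_cons j (face I t))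
      * xhat R (ffun_cons j (face I t)) * mderiv (I t) f
  = cIS b I * xhat R I * mderiv j f.
Proof.
move=> homf injI; apply: (mulfI (mpolyX_neq0 j)); rewrite mulr_sumr.
have term (t : 'I_d.+1) : 'X_j * ((-1) ^+ t * cIS b (ffun_cons j (face I t))
      * xhat R (ffun_cons j (face I t)) * mderiv (I t) f) =
    xhat R I * ((-1) ^+ t * cIS b (ffun_cons j (face I t)) * ('X_(I t) * mderiv (I t) f)).
  have [jI|jI] := boolP (j \in codom (face I t)).
    by rewrite cI_ffun_cons_mem // !(mulr0, mul0r).
  have Xj : 'X_j * xhat R (ffun_cons j (face I t)) = xhat R (face I t).
    exact: mulX_xhat (codom_ffun_cons _ _) jI.
  have XIt : 'X_(I t) * xhat R I = xhat R (face I t).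
    exact: mulX_xhat (codom_face I t) (face_notin t injI).
  transitivity ((-1) ^+ t * cIS b (ffun_cons j (face I t))
      * ('X_j * xhat R (ffun_cons j (face I t))) * mderiv (I t) f); first by ring.
  by rewrite Xj -XIt; ring.
under eq_bigr => t _ do rewrite term.
by rewrite -mulr_sumr cI_euler_ffun_cons //; ring.
Qed.

Definition jacobian_cochain b (g : 'I_n -> S) (J : {ffun 'I_d -> 'I_n}) : S :=
  \sum_j cIS b (ffun_cons j J) * xhat R (ffun_cons j J) * g j.

Lemma jacobian_cochain_coboundary b (f : S) g (I : {ffun 'I_d.+1 -> 'I_n}) :
  is_homog e b f -> injective I ->
  \sum_(t < d.+1) (-1) ^+ t * (jacobian_cochain b g (face I t) * mderiv (I t) f)
  = (\sum_j g j * mderiv j f) * cIS b I * xhat R I.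
Proof.
move=> homf injI; rewrite !mulr_suml.
under eq_bigr => t _ do rewrite mulr_suml mulr_sumr.
rewrite exchange_big /=; apply: eq_bigr => j _.
transitivity (g j * (cIS b I * xhat R I * mderiv j f)); last by ring.
rewrite -(xhat_euler_ffun_cons j homf injI) mulr_sumr.
by apply: eq_bigr => t _; ring.
Qed.

(* The right-hand degree is that of [h * c^beta_I * \hat x_I]. *)
Lemma homog_part_face_mderiv b (f : S) (I : {ffun 'I_d.+1 -> 'I_n}) t p :
  is_homog e b f -> injective I ->
  homog_part e (omega_deg b 1 (face I t)) p * mderiv (I t) f =
  homog_part e (fun k => (d.+1)%:Z * b k - 2 + 0 + (k \notin codom I : nat)%:Z)
    (p * mderiv (I t) f).
Proof.
move=> homf injI; apply: homog_partM (homog_mderiv (j := I t) homf) => k.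
have := sum_face_eq t k injI; rewrite /omega_deg.
case: (k \in codom I) (I t == k) => [] [] /= eq_k; lia.
Qed.

End JacobianCochain.

Lemma loc_eq_eq (R : realType) n (g a a' : {mpoly R[i][n]}) p : a = a' -> loc_eq g a p a' p.
Proof. by move=> ->; exists 0%N; rewrite subrr mulr0. Qed.

Theorem mainTheorem10 (R : realType) (d n : nat) (e : 'I_n -> 'rV[int]_d)
  (Sigma : {set {set 'I_n}}) (b : 'I_n -> int) (f h : {mpoly R[i][n]}) :
  complete_simplicial_fan R e Sigma ->
  f != 0 -> is_homog e b f -> quasismooth Sigma f ->
  in_jacobian f h -> is_homog e (fun i => (d.+1)%:Z * b i - 2) h ->
  cech_coboundary e b f h.
Proof.
move=> _ _ homf _ [g def_h] homh.
exists 1%N, (fun J => homog_part e (omega_deg b 1 J) (jacobian_cochain e b g J)).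
split=> [J _|I /incr_injective injI]; first exact: homog_part_homog.
apply: loc_eq_eq.
have homt := homog_mul (fun k => erefl)
  (homog_mul (fun k => erefl) homh (homog_C e (c := (cI e b I)%:~R)))
  (homog_prodX e (R := R) (P := fun i => i \notin codom I)).
rewrite -[RHS](homog_part_id homt) rmorph_int.
rewrite def_h -(jacobian_cochain_coboundary g homf injI) raddf_sum.
apply: eq_bigr => t _.
by rewrite expr1 -mulrA (homog_part_face_mderiv _ _ homf injI) raddfMsign.
Qed.
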